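(* Let $N$ be a lattice of rank $n$ with basis $\mathbf{e}_1,\ldots,\mathbf{e}_n$, $M$ its dual lattice with dual basis $\mathbf{e}_1^\vee,\ldots,\mathbf{e}_n^\vee$, and let $\mathbf{v}_0,\ldots,\mathbf{v}_n\in N$ with coordinate matrix $V=(\mathbf{v}_0,\ldots,\mathbf{v}_n)=(v_{ij})$ such that $\Sigma=\mathrm{fan}(\mathbf{v}_0,\ldots,\mathbf{v}_n)$ is a fan of $\mathbb{P}(Q)$, i.e. $\sum_{j=0}^n q_j\mathbf{v}_j=0$ and $|\det(\mathbf{v}_1,\ldots,\mathbf{v}_n)|=q_0$, with $Q=(q_0,\ldots,q_n)$ a weights vector (so $q_j=|V_j|$ for all $j$). Let $Q'$ be the reduction of $Q$, $\delta'=\mathrm{lcm}(Q')$, $\delta=\mathrm{lcm}(Q)$, let $\mathbf{n}_j$ be the primitive generator of $\mathbb{R}_{\ge0}\mathbf{v}_j\cap N$, and let $\Delta$ be the polytope of the divisor $H=(\delta'/q'_0)D_0$, namely $\Delta=\{\mathbf{u}\in M\otimes\mathbb{R}:\langle\mathbf{u},\mathbf{n}_0\rangle\geq-\delta'/q'_0,\ \langle\mathbf{u},\mathbf{n}_k\rangle\geq0\ (1\le k\le n)\}$. Then $\Delta=\mathrm{conv}(\mathbf{0},\mathbf{w}_1,\ldots,\mathbf{w}_n)$, where $\mathbf{w}_1,\ldots,\mathbf{w}_n\in M$ are distinct, integral, nonzero vectors whose coordinate matrix $W=(\mathbf{w}_1,\ldots,\mathbf{w}_n)$ in the dual basis is the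 weighted transverse matrix $W=(V^0)^*_Q=((V^0)^{-1})^T\cdot\delta\,\mathrm{diag}(1/q_1,\ldots,1/q_n)$ of $V$, where $V^0=(\mathbf{v}_1,\ldots,\mathbf{v}_n)$. Explicitly, $w_{ik}=\dfrac{\delta\,V^0_{ik}}{q_kV_0}$ for $1\le i,k\le n$, where $V^0_{ik}$ is the cofactor of $v_{ik}$ in $V^0$ and $V_0=\det(V^0)=\pm q_0$.
   Context: A weights vector is an $(n+1)$-tuple of positive integers with gcd $1$; with $d_j=\gcd(q_i:i\neq j)$, $a_j=\mathrm{lcm}(d_i:i\neq j)$, the reduction is $Q'=(q_j/a_j)$. $\mathbb{P}(Q)$ is the weighted projective space $\mathbb{P}^n/((\mu_{q_0}\oplus\cdots\oplus\mu_{q_n})/\Delta)$. $\mathrm{fan}(\mathbf{v}_0,\ldots,\mathbf{v}_n)$ is the collection of cones generated by proper subsets of $\{\mathbf{v}_0,\ldots,\mathbf{v}_n\}$. $V_j$ denotes the determinant of $V$ with column $j$ deleted. $D_0$ is the torus-invariant prime divisor of the ray through $\mathbf{v}_0$. *)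

From HB Require Import structures.
From mathcomp Require Import all_boot all_order all_algebra.
Set Implicit Arguments. Unset Strict Implicit. Unset Printing Implicit Defensive.
Import Order.TTheory GRing.Theory Num.Theory.
Local Open Scope ring_scope.

Definition weights_vector (n : nat) (Q : 'I_n.+1 -> nat) : Prop :=
  (forall j, (0 < Q j)%N) /\ (\big[gcdn/0%N]_(j < n.+1) Q j = 1)%N.

Definition red_d (n : nat) (Q : 'I_n.+1 -> nat) (j : 'I_n.+1) : nat :=
  \big[gcdn/0%N]_(i < n.+1 | i != j) Q i.
Definition red_a (n : nat) (Q : 'I_n.+1 -> nat) (j : 'I_n.+1) : nat :=
  \big[lcmn/1%N]_(i < n.+1 | i != j) red_d Q i.
Definition reduction (n : nat) (Q : 'I_n.+1 -> nat) (j : 'I_n.+1) : nat :=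
  (Q j %/ red_a Q j)%N.

Definition lcm_tuple (n : nat) (Q : 'I_n.+1 -> nat) : nat :=
  \big[lcmn/1%N]_(j < n.+1) Q j.

Definition intv (R : realFieldType) (n : nat) (x : 'cV[int]_n) : 'cV[R]_n :=
  map_mx (fun z : int => z%:~R) x.

Definition on_ray (R : realFieldType) (n : nat) (v x : 'cV[int]_n) : Prop :=
  exists t : R, 0 <= t /\ intv R x = t *: intv R v.

Definition primitive_generator (R : realFieldType) (n : nat) (v p : 'cV[int]_n) : Prop :=
  [/\ on_ray R v p, p != 0 &
      forall x : 'cV[int]_n, on_ray R v x -> exists k : nat, x = k%:Z *: p].

(* Pairing <u, x> of u in M (x) R (row coordinates in the dual basis) with x in N. *)
Definition pairing (R : realFieldType) (n : nat) (u : 'rV[R]_n) (x : 'cV[int]_n) : R :=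
  (u *m intv R x) 0 0.

Definition in_conv (R : realFieldType) (n m : nat) (P : 'I_m -> 'rV[R]_n) (u : 'rV[R]_n) : Prop :=
  exists l : 'I_m -> R,
    [/\ forall i, 0 <= l i, \sum_i l i = 1 & u = \sum_i l i *: P i].

Definition V0mx (n : nat) (V : 'M[int]_(n, n.+1)) : 'M[int]_n :=
  \matrix_(i, k) V i (lift ord0 k).

From HB Require Import structures.
From mathcomp Require Import all_boot all_order all_algebra.
From mathcomp Require Import ring.
Import Order.TTheory GRing.Theory Num.Theory.

Set Implicit Arguments.
Unset Strict Implicit.
Unset Printing Implicit Defensive.

(* Write A = V^0.  The rows w_k satisfy w_k A = (delta / q_k) e_k, so every u is
   sum_k lambda_k w_k with lambda_k = q_k <u, v_k> / delta, and the relation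
   sum_j q_j v_j = 0 turns this into <u, v_0> = - (delta / q_0) sum_k lambda_k.
   The primitive generators are n_k = t_k v_k with t_k > 0 and n_0 = v_0 / d_0,
   and delta' / q'_0 = delta / (d_0 q_0); hence the inequalities defining Delta
   read lambda_k >= 0 and sum_k lambda_k <= 1, i.e. Delta = conv(0, w_1, ..., w_n).
   Each w_k pairs integrally with every v_j, so det(M) w_k is integral for any
   integer matrix M with columns among the v_j.  By Cramer's rule A and the
   matrices obtained from A by replacing one column by v_0 have determinants
   +-q_0, +-q_1, ..., +-q_n, and gcd(Q) = 1 makes w_k itself integral. *)

Lemma exists_ord_neq (n : nat) (i : 'I_n.+1) : (0 < n)%N -> exists j, j != i.
Proof.
move=> n_gt0; case: (unliftP ord0 i) => [k ->|->].
  by exists ord0; rewrite neq_lift.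
by exists (lift ord0 (Ordinal n_gt0)); rewrite eq_sym neq_lift.
Qed.

Section Reduction.
Variables (n : nat) (Q : 'I_n.+1 -> nat).
Hypothesis wQ : weights_vector Q.

Lemma weight_gt0 j : (0 < Q j)%N.
Proof. by case: wQ. Qed.

Lemma lcm_tuple_gt0 : (0 < lcm_tuple Q)%N.
Proof.
apply: (big_ind (fun x => 0 < x)%N) => // [x y|j _]; last exact: weight_gt0.
by rewrite lcmn_gt0 => ->.
Qed.

Lemma red_d_dvd i j : i != j -> (red_d Q j %| Q i)%N.
Proof. by move=> ij; apply: (biggcdn_inf i). Qed.

Lemma coprime_red_d j : coprime (red_d Q j) (Q j).
Proof. by case: wQ => _; rewrite (bigD1 j) //= /coprime gcdnC => ->. Qed.

Lemma coprime_red_d_neq i j : i != j -> coprime (red_d Q i) (red_d Q j).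
Proof.
move=> ij; rewrite coprime_sym (coprime_dvdl (red_d_dvd ij)) //.
by rewrite coprime_sym coprime_red_d.
Qed.

Lemma red_a_dvd j : (red_a Q j %| Q j)%N.
Proof. by apply/dvdn_biglcmP => i ij; rewrite red_d_dvd // eq_sym. Qed.

Lemma coprime_red_a_d j : coprime (red_a Q j) (red_d Q j).
Proof.
apply: (big_ind (fun x => coprime x (red_d Q j))) => [||i]; first exact: coprime1n.
  move=> x y cx cy; apply: (@coprime_dvdl _ (x * y)); last by rewrite coprimeMl cx cy.
  by rewrite dvdn_lcm dvdn_mulr ?dvdn_mull.
exact: coprime_red_d_neq.
Qed.

Definition lcm_red_d : nat := \big[lcmn/1%N]_(i < n.+1) red_d Q i.

Lemma red_a_mul_d j : (red_a Q j * red_d Q j = lcm_red_d)%N.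
Proof.
rewrite /lcm_red_d (bigD1 j) //= -muln_lcm_gcd.
by rewrite (eqP (coprime_red_a_d j)) muln1 lcmnC.
Qed.

Lemma reductionE j : Q j = (reduction Q j * red_a Q j)%N.
Proof. by rewrite divnK // red_a_dvd. Qed.

Hypothesis n_gt0 : (0 < n)%N.

Lemma red_d_gt0 j : (0 < red_d Q j)%N.
Proof.
have [i ij] := exists_ord_neq j n_gt0.
exact: dvdn_gt0 (weight_gt0 i) (red_d_dvd ij).
Qed.

Lemma red_d_dvd_lcm i : (red_d Q i %| lcm_tuple Q)%N.
Proof.
have [j ji] := exists_ord_neq i n_gt0.
by apply: dvdn_trans (red_d_dvd ji) _; apply: biglcmn_sup.
Qed.

Lemma lcm_tupleE : lcm_tuple Q = (lcm_tuple (reduction Q) * lcm_red_d)%N.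
Proof.
have Ld_dvd : (lcm_red_d %| lcm_tuple Q)%N.
  by apply/dvdn_biglcmP => i _; apply: red_d_dvd_lcm.
apply/eqP; rewrite eqn_dvd; apply/andP; split.
  apply/dvdn_biglcmP => j _; rewrite (reductionE j) dvdn_mul //.
    exact: (biglcmn_sup j).
  by rewrite -(red_a_mul_d j) dvdn_mulr.
rewrite -[X in (_ %| X)%N](divnK Ld_dvd) dvdn_mul //; apply/dvdn_biglcmP => j _.
rewrite dvdn_divRL // -(red_a_mul_d j) mulnA -(reductionE j).
rewrite Gauss_dvd; last by rewrite coprime_sym coprime_red_d.
by rewrite (biglcmn_sup j) // red_d_dvd_lcm.
Qed.

Lemma lcm_reduction_ratio j :
  (lcm_tuple (reduction Q) * (red_d Q j * Q j) = lcm_tuple Q * reduction Q j)%N.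
Proof.
by rewrite lcm_tupleE -(red_a_mul_d j) {1}(reductionE j); ring.
Qed.

End Reduction.

Local Open Scope ring_scope.

Section Cramer.
Variables (n : nat) (V : 'M[int]_(n, n.+1)) (Q : 'I_n.+1 -> nat).
Hypothesis relQ : \sum_(j < n.+1) (Q j)%:Z *: col j V = 0.
Local Notation A := (V0mx V).

Lemma weight_relation i :
  (Q ord0)%:Z * V i ord0 = - \sum_k A i k * (Q (lift ord0 k))%:Z.
Proof.
have /eqP := congr1 (fun M : 'cV_n => M i 0) relQ.
rewrite /= summxE big_ord_recl !mxE addr_eq0 => /eqP ->; congr (- _).
by apply: eq_bigr => k _; rewrite !mxE mulrC.
Qed.

Definition cramer_mx (l : 'I_n) : 'M[int]_n :=
  \matrix_(i, k) if k == l then V i ord0 else A i k.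

Lemma det_cramer_mx l : \det (cramer_mx l) = \sum_i V i ord0 * cofactor A i l.
Proof.
rewrite (expand_det_col _ l); apply: eq_bigr => i _; rewrite mxE eqxx.
congr (_ * (_ * \det _)); apply/matrixP => a b; rewrite !mxE.
by rewrite eq_sym (negbTE (neq_lift _ _)).
Qed.

Lemma det_cramer_relation l :
  \det A * (Q (lift ord0 l))%:Z = - ((Q ord0)%:Z * \det (cramer_mx l)).
Proof.
pose q : 'cV[int]_n := \col_k (Q (lift ord0 k))%:Z.
have Aq : A *m q = - (Q ord0)%:Z *: col ord0 V.
  apply/matrixP => i j; rewrite (ord1 j) !mxE mulNr weight_relation opprK.
  by apply: eq_bigr => k _; rewrite !mxE.
have /(congr1 (fun M : 'cV_n => M l 0)) := congr1 (mulmx (\adj A)) Aq.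
rewrite mulmxA mul_adj_mx mul_scalar_mx -scalemxAr !mxE mulNr => ->.
rewrite det_cramer_mx; congr (- (_ * _)).
by apply: eq_bigr => i _; rewrite !mxE mulrC.
Qed.

Hypothesis detQ : `|\det A| = (Q ord0)%:Z.
Hypothesis Q0_gt0 : (0 < Q ord0)%N.

Lemma abs_det_cramer_mx l : `|\det (cramer_mx l)|%N = Q (lift ord0 l).
Proof.
have absA : `|\det A|%N = Q ord0 by apply/eqP; rewrite -eqz_nat abszE detQ.
have /eqP := congr1 absz (det_cramer_relation l).
by rewrite abszN !abszM absA /= eqn_pmul2l // => /eqP.
Qed.

Lemma dvdz_det_cramer_mx (m : int) l :
  (forall i, (m %| V i ord0)%Z) -> (m %| \det (cramer_mx l))%Z.
Proof.
by move=> mV; rewrite det_cramer_mx; apply: rpred_sum => i _; apply: dvdz_mulr.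
Qed.

Hypothesis wQ : weights_vector Q.

Lemma red_d_dvdz_v0 i : ((red_d Q ord0)%:Z %| V i ord0)%Z.
Proof.
have cd : coprimez (red_d Q ord0) (Q ord0) by exact: coprime_red_d.
rewrite -(Gauss_dvdzl _ cd) mulrC weight_relation rpredN.
apply: rpred_sum => k _; apply: dvdz_mull.
by apply: red_d_dvd; rewrite eq_sym neq_lift.
Qed.

End Cramer.

Section Rays.
Variables (R : realFieldType) (n : nat).
Implicit Types (u : 'rV[R]_n) (v p x : 'cV[int]_n).

Lemma intv_inj : injective (@intv R n).
Proof.
move=> x y /matrixP xy; apply/matrixP => i j.
by have := xy i j; rewrite !mxE; apply: intr_inj.
Qed.

Lemma intvZ (c : int) x : intv R (c *: x) = c%:~R *: intv R x.
Proof. by apply/matrixP => i j; rewrite !mxE intrM. Qed.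

Lemma intv_eq0 x : (intv R x == 0) = (x == 0).
Proof.
have intv0 : intv R 0 = 0 :> 'cV_n by apply/matrixP => i j; rewrite !mxE.
by rewrite -intv0 (inj_eq intv_inj).
Qed.

Lemma pairing_scale u v p t : intv R p = t *: intv R v ->
  pairing u p = t * pairing u v.
Proof. by rewrite /pairing => ->; rewrite -scalemxAr mxE. Qed.

Lemma primitive_generator_scale v p : primitive_generator R v p ->
  exists2 t : R, 0 < t & intv R p = t *: intv R v.
Proof.
case=> [[t [t_ge0 pv]] p0 _]; exists t => //.
rewrite lt_def t_ge0 andbT; apply: contraNneq p0 => t0.
by rewrite -intv_eq0 pv t0 scale0r.
Qed.

Lemma primitive_generator_mul v p : primitive_generator R v p ->
  exists m : nat, v = m%:Z *: p.
Proof. by case=> _ _; apply; exists 1; rewrite ler01 scale1r. Qed.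

Lemma primitive_generator_dvd v p x (m c : nat) : primitive_generator R v p ->
  v = m%:Z *: p -> v = c%:Z *: x -> (0 < c)%N -> (c %| m)%N.
Proof.
move=> [_ p0 prim] vp vx c_gt0.
have [k xk] : exists k : nat, x = k%:Z *: p.
  apply: prim; exists c%:R^-1; rewrite invr_ge0 ler0n; split=> //.
  by rewrite vx intvZ scalerA mulVf ?scale1r // pnatr_eq0 -lt0n.
move: vx; rewrite vp xk scalerA => /eqP; rewrite -subr_eq0 -scalerBl.
rewrite scalemx_eq0 (negbTE p0) orbF subr_eq0 -PoszM => /eqP [->].
exact: dvdn_mulr.
Qed.

End Rays.

Section PrimitiveV0.
Variables (R : realFieldType) (n : nat) (V : 'M[int]_(n, n.+1)) (Q : 'I_n.+1 -> nat).
Hypothesis wQ : weights_vector Q.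
Hypothesis relQ : \sum_(j < n.+1) (Q j)%:Z *: col j V = 0.
Hypothesis detQ : `|\det (V0mx V)| = (Q ord0)%:Z.
Hypothesis n_gt0 : (0 < n)%N.

(* d_0 divides v_0 since q_0 v_0 = - sum_k q_k v_k with d_0 | q_k and
   gcd(d_0, q_0) = 1; conversely if v_0 = m n_0 then m divides every
   det (cramer_mx V l) = +-q_l, hence d_0. *)
Lemma primitive_generator_v0 p : primitive_generator R (col ord0 V) p ->
  col ord0 V = (red_d Q ord0)%:Z *: p.
Proof.
move=> pg; have [m vm] := primitive_generator_mul pg.
have d_dvd_m : (red_d Q ord0 %| m)%N.
  pose x : 'cV[int]_n := \col_i (V i ord0 %/ (red_d Q ord0)%:Z)%Z.
  apply: (primitive_generator_dvd (x := x) pg vm); last exact: red_d_gt0.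
  by apply/matrixP => i j; rewrite (ord1 j) !mxE mulrC divzK // red_d_dvdz_v0.
have m_dvd_d : (m %| red_d Q ord0)%N.
  apply/dvdn_biggcdP => i; case: (unliftP ord0 i) => [l ->|->] // _.
  rewrite -(abs_det_cramer_mx relQ detQ (weight_gt0 wQ ord0) l).
  apply: (dvdz_det_cramer_mx (m := m%:Z)) => i'.
  by have := congr1 (fun M : 'cV_n => M i' 0) vm; rewrite !mxE => ->; apply: dvdz_mulr.
by rewrite vm; congr (Posz _ *: _); apply/eqP; rewrite eqn_dvd m_dvd_d d_dvd_m.
Qed.

End PrimitiveV0.

Section IntegralElements.
Variable R : comNzRingType.

Definition is_intr (r : R) : Prop := exists z : int, r = z%:~R.

Lemma is_intr_int (z : int) : is_intr z%:~R.
Proof. by exists z. Qed.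

Lemma is_intr_nat (m : nat) : is_intr m%:R.
Proof. by exists m. Qed.

Lemma is_intrN r : is_intr r -> is_intr (- r).
Proof. by move=> [z ->]; exists (- z); rewrite mulrNz. Qed.

Lemma is_intrM r s : is_intr r -> is_intr s -> is_intr (r * s).
Proof. by move=> [x ->] [y ->]; exists (x * y); rewrite intrM. Qed.

Lemma is_intr_sum (I : finType) (F : I -> R) :
  (forall i, is_intr (F i)) -> is_intr (\sum_i F i).
Proof.
move=> Fint; apply: (big_ind is_intr) => [|_ _ [x ->] [y ->]|//]; first by exists 0.
by exists (x + y); rewrite intrD.
Qed.

Lemma is_intr_absz (z : int) r : is_intr (z%:~R * r) -> is_intr ((`|z|%N)%:R * r).
Proof. by case: z => m // /is_intrN; rewrite NegzE mulrNz mulNr opprK. Qed.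

Lemma is_intr_gcd (m : nat) (q : 'I_m -> nat) r :
  \big[gcdn/0%N]_(j < m) q j = 1%N -> (forall j, is_intr ((q j)%:R * r)) ->
  is_intr r.
Proof.
move=> q_coprime qr; rewrite -[r]mul1r -[1]/(1%:R) -q_coprime.
apply: (big_ind (fun g => is_intr (g%:R * r))) => //; first by exists 0; rewrite mul0r.
move=> a b [x ar] [y br]; have [u [v uv]] := Bezoutz a b.
exists (u * x + v * y); rewrite -[(gcdn a b)%:R]/((gcdz a b)%:~R) -uv.
by rewrite !intrD !intrM -ar -br !pmulrn mulrDl -!mulrA.
Qed.

Lemma is_intr_det_mul (m : nat) (M : 'M[int]_m) (x : 'rV[R]_m) :
  (forall j, is_intr ((x *m map_mx (fun z : int => z%:~R) M) 0 j)) ->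
  forall i, is_intr ((\det M)%:~R * x 0 i).
Proof.
move=> xM i.
have -> : (\det M)%:~R * x 0 i =
    ((x *m map_mx (fun z : int => z%:~R) M) *m map_mx (fun z : int => z%:~R) (\adj M)) 0 i.
  by rewrite -mulmxA -map_mxM mul_mx_adj map_scalar_mx mul_mx_scalar mxE.
rewrite mxE; apply: is_intr_sum => j; apply: is_intrM; first exact: xM.
by rewrite mxE; apply: is_intr_int.
Qed.

End IntegralElements.

Lemma sum_unlift0 (R : pzRingType) (U : lmodType R) (n : nat)
    (l : 'I_n.+1 -> R) (F : 'I_n -> U) :
  \sum_j l j *: (match unlift ord0 j with None => 0 | Some k => F k end) =
  \sum_k l (lift ord0 k) *: F k.
Proof.
by rewrite big_ord_recl unlift_none scaler0 add0r; apply: eq_bigr => k _; rewrite liftK.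
Qed.

Section TransverseMatrix.
Variables (R : realFieldType) (n : nat) (V : 'M[int]_(n, n.+1)) (Q : 'I_n.+1 -> nat).
Hypothesis wQ : weights_vector Q.
Hypothesis relQ : \sum_(j < n.+1) (Q j)%:Z *: col j V = 0.
Hypothesis detQ : `|\det (V0mx V)| = (Q ord0)%:Z.

Local Notation A := (V0mx V).
Local Notation AR := (map_mx (fun z : int => z%:~R : R) (V0mx V)).
Local Notation delta := (lcm_tuple Q).

Definition transverse_vec (k : 'I_n) : 'rV[R]_n :=
  \row_i ((delta%:R * (cofactor A i k)%:~R) / ((Q (lift ord0 k))%:R * (\det A)%:~R)).

Definition transverse_coord (u : 'rV[R]_n) (k : 'I_n) : R :=
  (u *m AR) 0 k * (Q (lift ord0 k))%:R / delta%:R.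

Lemma weightR_neq0 j : (Q j)%:R != 0 :> R.
Proof. by rewrite pnatr_eq0 -lt0n weight_gt0. Qed.

Lemma deltaR_neq0 : delta%:R != 0 :> R.
Proof. by rewrite pnatr_eq0 -lt0n lcm_tuple_gt0. Qed.

Lemma detR_neq0 : (\det A)%:~R != 0 :> R.
Proof.
rewrite intr_eq0 -normr_eq0 detQ eqz_nat -lt0n; exact: weight_gt0.
Qed.

Lemma transverse_vec_mulmx k m :
  (transverse_vec k *m AR) 0 m = (k == m)%:R * (delta%:R / (Q (lift ord0 k))%:R).
Proof.
have adjA : \sum_i (cofactor A i k)%:~R * (A i m)%:~R = ((\det A) *+ (k == m))%:~R :> R.
  transitivity (((\adj A *m A) k m)%:~R : R); last by rewrite mul_adj_mx mxE.
  by rewrite mxE rmorph_sum; apply: eq_bigr => i _; rewrite !mxE -rmorphM.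
rewrite mxE; transitivity (delta%:R / ((Q (lift ord0 k))%:R * (\det A)%:~R) *
    \sum_i (cofactor A i k)%:~R * (A i m)%:~R : R).
  by rewrite mulr_sumr; apply: eq_bigr => i _; rewrite !mxE; ring.
rewrite adjA; case: (k == m) => /=; last by rewrite mulr0n mulr0 mul0r.
have := detR_neq0; have := weightR_neq0 (lift ord0 k).
by move=> qk D0; rewrite mulr1n; field; rewrite qk D0.
Qed.

Lemma pairing_lift u k : pairing u (col (lift ord0 k) V) = (u *m AR) 0 k.
Proof. by rewrite /pairing /intv !mxE; apply: eq_bigr => i _; rewrite !mxE. Qed.

Lemma transverse_coord_vec k m : transverse_coord (transverse_vec k) m = (k == m)%:R.
Proof.
rewrite /transverse_coord transverse_vec_mulmx; case: eqP => [<-|_]; last by rewrite !mul0r.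
by rewrite mul1r mulfVK ?weightR_neq0 // divff ?deltaR_neq0.
Qed.

Lemma transverse_coordD a m :
  transverse_coord (\sum_k a k *: transverse_vec k) m = a m.
Proof.
transitivity (\sum_k a k * transverse_coord (transverse_vec k) m).
  rewrite /transverse_coord mulmx_suml summxE !mulr_suml.
  by apply: eq_bigr => k _; rewrite -scalemxAl mxE !mulrA.
under eq_bigr => k _ do rewrite transverse_coord_vec.
by rewrite (bigD1 m) //= eqxx mulr1 big1 ?addr0 // => k /negbTE ->; rewrite mulr0.
Qed.

Lemma transverse_coordK u : \sum_k transverse_coord u k *: transverse_vec k = u.
Proof.
have D0 := detR_neq0.
transitivity (((\det A)%:~R^-1 *: (u *m AR)) *m \adj AR); last first.
  rewrite -scalemxAl -mulmxA mul_mx_adj det_map_mx mul_mx_scalar scalerA.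
  by rewrite mulVf // scale1r.
rewrite mulmx_sum_row; apply: eq_bigr => k _.
have -> : transverse_vec k =
    (delta%:R / ((Q (lift ord0 k))%:R * (\det A)%:~R)) *: row k (\adj AR).
  by apply/rowP => i; rewrite -map_mx_adj !mxE mulrAC.
rewrite scalerA; congr (_ *: _); rewrite mxE /transverse_coord.
have := weightR_neq0 (lift ord0 k); have := deltaR_neq0.
by move=> d0 q0; field; rewrite d0 D0 q0.
Qed.

Lemma pairing_v0 u :
  pairing u (col ord0 V) = - (delta%:R / (Q ord0)%:R) * \sum_k transverse_coord u k.
Proof.
have q0 := weightR_neq0 ord0; have d0 := deltaR_neq0; apply: (mulIf q0).
have -> : pairing u (col ord0 V) * (Q ord0)%:R =
    - \sum_k (u *m AR) 0 k * (Q (lift ord0 k))%:R.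
  rewrite /pairing /intv mxE mulr_suml.
  transitivity (\sum_i u 0 i * (((Q ord0)%:Z * V i ord0)%:~R : R)).
    by apply: eq_bigr => i _; rewrite !mxE intrM pmulrn mulrAC mulrA.
  under eq_bigr => i _ do rewrite weight_relation // rmorphN rmorph_sum mulrN mulr_sumr.
  rewrite sumrN exchange_big /=; congr (- _); apply: eq_bigr => k _.
  by rewrite mxE mulr_suml; apply: eq_bigr => i _; rewrite !mxE rmorphM mulrA.
by rewrite /transverse_coord -mulr_suml; field; rewrite q0 d0.
Qed.

Lemma is_intr_delta_div j : is_intr (delta%:R / (Q j)%:R : R).
Proof.
have qj : (Q j %| delta)%N by apply: (biglcmn_sup j).
by rewrite -(divnK qj) natrM mulfK ?weightR_neq0 //; apply: is_intr_nat.
Qed.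

Lemma is_intr_transverse_vec_mulmx k m : is_intr ((transverse_vec k *m AR) 0 m).
Proof.
rewrite transverse_vec_mulmx; case: (k == m); last by rewrite mul0r; exists 0.
by rewrite mul1r; apply: is_intr_delta_div.
Qed.

Lemma cramer_mx_mulmx (x : 'rV[R]_n) l m :
  (x *m map_mx (fun z : int => z%:~R) (cramer_mx V l)) 0 m =
  if m == l then pairing x (col ord0 V) else (x *m AR) 0 m.
Proof.
rewrite /pairing /intv !mxE; case: eqP => [->|/eqP/negbTE ml]; rewrite ?mxE;
  by apply: eq_bigr => i _; rewrite !mxE ?eqxx ?ml.
Qed.

Lemma pairing_transverse_v0 k :
  pairing (transverse_vec k) (col ord0 V) = - (delta%:R / (Q ord0)%:R).
Proof.
rewrite pairing_v0 (bigD1 k) //= big1 => [|m km]; last first.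
  by rewrite transverse_coord_vec eq_sym (negbTE km).
by rewrite transverse_coord_vec eqxx addr0 mulr1.
Qed.

Lemma transverse_vec_int k i : is_intr (transverse_vec k 0 i).
Proof.
have wA m := is_intr_transverse_vec_mulmx k m.
apply: (is_intr_gcd (q := Q)); first by case: wQ.
move=> j; case: (unliftP ord0 j) => [l ->|->].
  rewrite -(abs_det_cramer_mx relQ detQ (weight_gt0 wQ ord0) l).
  apply/is_intr_absz/is_intr_det_mul => m; rewrite cramer_mx_mulmx.
  case: eqP => _; last exact: wA.
  by rewrite pairing_transverse_v0; apply/is_intrN/is_intr_delta_div.
have absA : `|\det A|%N = Q ord0 by apply/eqP; rewrite -eqz_nat abszE detQ.
by rewrite -absA; apply/is_intr_absz/is_intr_det_mul.
Qed.

Lemma transverse_vec_neq0 k : transverse_vec k != 0.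
Proof.
apply/eqP => w0; have := transverse_coord_vec k k.
by rewrite w0 eqxx /transverse_coord mul0mx mxE !mul0r => /eqP; rewrite eq_sym oner_eq0.
Qed.

Lemma transverse_vec_inj : injective transverse_vec.
Proof.
move=> k m wkm; have := transverse_coord_vec k k; rewrite wkm transverse_coord_vec eqxx.
by case: eqP => [->|_ /eqP] //; rewrite eq_sym oner_eq0.
Qed.

Hypothesis n_gt0 : (0 < n)%N.
Variable nv : 'I_n.+1 -> 'cV[int]_n.
Hypothesis nv_prim : forall j, primitive_generator R (col j V) (nv j).

Local Notation height :=
  ((lcm_tuple (reduction Q))%:R / (reduction Q ord0)%:R : R).

Lemma red_dR_neq0 j : (red_d Q j)%:R != 0 :> R.
Proof. by rewrite pnatr_eq0 -lt0n red_d_gt0. Qed.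

Lemma heightE : height = delta%:R / (Q ord0)%:R / (red_d Q ord0)%:R.
Proof.
have d0 := red_dR_neq0 ord0; have q0 := weightR_neq0 ord0.
have r0 : (reduction Q ord0)%:R != 0 :> R.
  by apply: contra q0; rewrite (reductionE Q ord0) natrM => /eqP ->; rewrite mul0r.
have /(congr1 (fun m => m%:R : R)) := lcm_reduction_ratio wQ n_gt0 ord0.
rewrite !natrM => e; apply/eqP; rewrite -mulrA -invfM eqr_div ?mulf_neq0 //.
by rewrite [(Q ord0)%:R * _]mulrC e.
Qed.

Lemma height_gt0 : 0 < height.
Proof.
rewrite heightE !divr_gt0 // ltr0n.
- exact: lcm_tuple_gt0.
- exact: weight_gt0.
- exact: red_d_gt0.
Qed.

Lemma pairing_nv0 u : pairing u (nv ord0) = - height * \sum_k transverse_coord u k.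
Proof.
have v0 := primitive_generator_v0 wQ relQ detQ n_gt0 (nv_prim ord0).
have d0 := red_dR_neq0 ord0.
have -> : pairing u (nv ord0) = (red_d Q ord0)%:R^-1 * pairing u (col ord0 V).
  by apply: pairing_scale; rewrite v0 intvZ scalerA pmulrn mulVf ?scale1r.
by rewrite pairing_v0 heightE mulrA mulrN [_^-1 * _]mulrC.
Qed.

Lemma pairing_nv_lift u k : exists2 t : R, 0 < t &
  pairing u (nv (lift ord0 k)) = t * transverse_coord u k.
Proof.
have [t t_gt0 nt] := primitive_generator_scale (nv_prim (lift ord0 k)).
exists (t * (delta%:R / (Q (lift ord0 k))%:R)).
  by rewrite mulr_gt0 ?divr_gt0 ?ltr0n ?(lcm_tuple_gt0 wQ) ?(weight_gt0 wQ).
rewrite (pairing_scale _ nt) pairing_lift /transverse_coord.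
have := weightR_neq0 (lift ord0 k); have := deltaR_neq0.
by move=> d0 q0; field; rewrite d0 q0.
Qed.

Lemma transverse_polytopeP u :
  (pairing u (nv ord0) >= - height /\ forall k, pairing u (nv (lift ord0 k)) >= 0) <->
  in_conv (fun j => match unlift ord0 j with None => 0 | Some k => transverse_vec k end) u.
Proof.
have H_gt0 := height_gt0.
split=> [[h0 hk]|[l [l_ge0 l_sum ->]]].
  have c_ge0 k : 0 <= transverse_coord u k.
    by have [t t_gt0 e] := pairing_nv_lift u k; move: (hk k); rewrite e pmulr_rge0.
  have c_le1 : \sum_k transverse_coord u k <= 1.
    by move: h0; rewrite pairing_nv0 mulNr lerN2 -[X in _ <= X]mulr1 ler_pM2l.
  exists (fun j => if unlift ord0 j is Some k then transverse_coord u k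
                   else 1 - \sum_k transverse_coord u k); split.
  - by move=> j; case: unlift; rewrite ?subr_ge0.
  - rewrite big_ord_recl unlift_none.
    rewrite [X in _ + X](eq_bigr (transverse_coord u)) ?subrK // => k _.
    by rewrite liftK.
  - rewrite sum_unlift0 -[LHS]transverse_coordK.
    by apply: eq_bigr => k _; rewrite liftK.
rewrite sum_unlift0; split=> [|k].
  rewrite pairing_nv0; under eq_bigr => k _ do rewrite transverse_coordD.
  move: l_sum; rewrite big_ord_recl => /(congr1 (fun x => x - l ord0)).
  rewrite addrC addKr => ->; rewrite mulrBr mulr1 lerDl mulNr opprK.
  by rewrite mulr_ge0 // ltW.
have [t t_gt0 ->] := pairing_nv_lift (\sum_m l (lift ord0 m) *: transverse_vec m) k.
by rewrite transverse_coordD mulr_ge0 // ltW.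
Qed.

End TransverseMatrix.

Theorem mainTheorem8 (R : realFieldType) (n : nat)
    (V : 'M[int]_(n, n.+1)) (Q : 'I_n.+1 -> nat)
    (nv : 'I_n.+1 -> 'cV[int]_n) :
  weights_vector Q ->
  \sum_(j < n.+1) (Q j)%:Z *: col j V = 0 ->
  `|\det (V0mx V)| = (Q ord0)%:Z ->
  (forall j, primitive_generator R (col j V) (nv j)) ->
  let delta := lcm_tuple Q in
  let delta' := lcm_tuple (reduction Q) in
  let w : 'I_n -> 'rV[R]_n := fun k =>
    \row_i ((delta%:R * (cofactor (V0mx V) i k)%:~R) /
            ((Q (lift ord0 k))%:R * (\det (V0mx V))%:~R)) in
  let Delta : 'rV[R]_n -> Prop := fun u =>
    pairing u (nv ord0) >= - (delta'%:R / (reduction Q ord0)%:R) /\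
    (forall k : 'I_n, pairing u (nv (lift ord0 k)) >= 0) in
  [/\ forall k i, exists z : int, w k 0 i = z%:~R,
      forall k, w k != 0,
      injective w &
      forall u : 'rV[R]_n,
        Delta u <-> in_conv (fun j : 'I_n.+1 =>
                     match unlift ord0 j with None => 0 | Some k => w k end) u].
Proof.
move=> wQ relQ detQ nv_prim delta delta' w Delta.
have [n0|n_gt0] := posnP n.
  by subst n; case: (nv_prim ord0) => _; rewrite flatmx0 eqxx.
split.
- exact: transverse_vec_int.
- exact: transverse_vec_neq0.
- exact: transverse_vec_inj.
- exact: transverse_polytopeP.
Qed.
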